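(* Let $\varepsilon\in[0,1)$ and $\mathcal{P},\mathcal{E}\subseteq\mathcal{D}(P)$. Then $$\beta W_{\mathrm{GPO},\varepsilon}(\mathcal{P},\mathcal{E})=D^{\mathcal{E}}_{\min,\varepsilon}(\mathcal{P}\|\mathcal{E}).$$
   Context: All Hilbert spaces are finite-dimensional; $\mathcal{D}(P)$ is the set of density operators on $P$; $T(X,Y)=\tfrac12\|X-Y\|_1$. Battery: qubit $B$ with basis $\{|0\rangle,|1\rangle\}$, $\pi_M=(1-\tfrac1M)|0\rangle\langle0|+\tfrac1M|1\rangle\langle1|$ for $M>1$. For a class of maps $\mathfrak{F}$, the one-shot extractable work into a clean battery is $\beta W_{\mathfrak{F},\varepsilon}(\mathcal{P},\mathcal{E})=\log\sup\{M>1:\exists\mathcal{F}\in\mathfrak{F}\text{ with } T(\mathcal{F}(\rho),|1\rangle\langle1|)\le\varepsilon\ \forall\rho\in\mathcal{P}\text{ and }\mathcal{F}(\tau)=\pi_M\ \forall\tau\in\mathcal{E}\}$. GPO (Gibbs-preserving operations) here means the class of CPTP maps, the Gibbs-preservation requirement being exactly the condition $\mathcal{F}(\tau)=\pi_M$ for all $\tau\in\mathcal{E}$. For $\mathcal{K}$ a set of operators, $V(\mathcal{K})=\operatorname{span}\{\tau-\tau':\tau,\tau'\in\mathcal{K}\}$, and $E\perp V(\mathcal{K})$ means $\operatorname{tr}[EX]=0$ for all $X\in V(\mathcal{K})$. The subspace-constrained min-relative entropy is $$D^{\mathcal{K}}_{\min,\varepsilon}(\mathcal{P}\|\mathcal{E})=-\log\min\Big\{\sup_{\tau\in\mathcal{E}}\operatorname{tr}[\tau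 E]:0\le E\le I,\ E\perp V(\mathcal{K}),\ \sup_{\rho\in\mathcal{P}}\operatorname{tr}[\rho(I-E)]\le\varepsilon\Big\},$$ with $-\log 0=+\infty$. *)

From HB Require Import structures.
From mathcomp Require Import all_boot all_order all_algebra.
From mathcomp Require Import sesquilinear spectral.
From mathcomp Require Import complex mxtens.
From mathcomp Require Import boolp classical_sets reals ereal exp.

Set Implicit Arguments.
Unset Strict Implicit.
Unset Printing Implicit Defensive.

Import Order.TTheory GRing.Theory Num.Theory.
Local Open Scope ring_scope.
Local Open Scope classical_set_scope.
Local Open Scope sesquilinear_scope.

Section QDefs.
Variable R : realType.
Local Notation C := R[i].

(* Positive semidefinite operator on C^m : Hermitian with <v|A|v> >= 0
   (0 <= z in C means z is real and nonnegative). *)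
Definition psd m (A : 'M[C]_m) : Prop :=
  A = A ^t* /\ forall v : 'cV[C]_m, 0 <= (v ^t* *m A *m v) 0 0.

Definition density n (A : 'M[C]_n) : Prop := psd A /\ \tr A = 1.

Definition effect n (E : 'M[C]_n) : Prop := psd E /\ psd (1%:M - E).

(* Trace norm ||X||_1 = max over unitaries U of |tr(U X)|
   (variational form of tr sqrt(X^* X)). *)
Definition trnorm n (X : 'M[C]_n) : R :=
  sup [set complex.Re `|\tr (U *m X)| | U in [set U : 'M[C]_n | U \is unitarymx]].

Definition tdist n (X Y : 'M[C]_n) : R := trnorm (X - Y) / 2.

(* Amplification (id_k (x) f) of a map f : M_n -> M_p, acting on
   operators on C^k (x) C^n (tensor index convention of mxtens). *)
Definition mxblock_of k n (X : 'M[C]_(k * n)) (i j : 'I_k) : 'M[C]_n :=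
  \matrix_(a, b) X (mxtens_index (i, a)) (mxtens_index (j, b)).

Definition ampl k n p (f : 'M[C]_n -> 'M[C]_p) (X : 'M[C]_(k * n))
  : 'M[C]_(k * p) :=
  \sum_(i < k) \sum_(j < k) (delta_mx i j *t f (mxblock_of X i j)).

Definition cptp n p (f : 'M[C]_n -> 'M[C]_p) : Prop :=
  (forall (a : C) (X Y : 'M[C]_n), f (a *: X + Y) = a *: f X + f Y) /\
  (forall (k : nat) (X : 'M[C]_(k * n)), psd X -> psd (ampl f X)) /\
  (forall X : 'M[C]_n, \tr (f X) = \tr X).

(* Battery qubit: |1><1| and pi_M = (1 - 1/M)|0><0| + (1/M)|1><1|. *)
Definition ket1proj : 'M[C]_2 := delta_mx 1 1.
Definition piM (M : R) : 'M[C]_2 :=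
  ((1 - M^-1)%:C)%C *: delta_mx 0 0 + ((M^-1)%:C)%C *: delta_mx 1 1.

Definition gpo_feasible n (eps : R) (P E : set 'M[C]_n) (M : R) : Prop :=
  1 < M /\ exists f : 'M[C]_n -> 'M[C]_2, cptp f /\
    (forall rho, P rho -> tdist (f rho) ket1proj <= eps) /\
    (forall tau, E tau -> f tau = piM M).

(* beta W_{GPO,eps}(P,E) = log sup{M > 1 : ...}; the sup is taken in
   [1, +oo] (empty set gives 1, i.e. work 0). *)
Definition betaW_GPO n (eps : R) (P E : set 'M[C]_n) : \bar R :=
  lne (ereal_sup (1%:E |` [set M%:E | M in gpo_feasible eps P E])).

Definition Vspan n (K : set 'M[C]_n) : set 'M[C]_n :=
  [set X | exists s : seq (C * 'M[C]_n * 'M[C]_n),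
     (forall t, t \in s -> K t.1.2 /\ K t.2) /\
     X = \sum_(t <- s) t.1.1 *: (t.1.2 - t.2)].

Definition perpV n (E : 'M[C]_n) (K : set 'M[C]_n) : Prop :=
  forall X, Vspan K X -> \tr (E *m X) = 0.

Definition Dmin_feasible n (K : set 'M[C]_n) (eps : R) (P : set 'M[C]_n)
  (E : 'M[C]_n) : Prop :=
  effect E /\ perpV E K /\
  (forall rho, P rho -> complex.Re (\tr (rho *m (1%:M - E))) <= eps).

Definition sup_tr n (Ecal : set 'M[C]_n) (E : 'M[C]_n) : \bar R :=
  ereal_sup [set (complex.Re (\tr (tau *m E)))%:E | tau in Ecal].

(* D^K_{min,eps}(P || Ecal) = - log min { ... }, with -log 0 = +oo. *)
Definition Dmin n (K : set 'M[C]_n) (eps : R) (P Ecal : set 'M[C]_n)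
  : \bar R :=
  (- lne (ereal_inf [set sup_tr Ecal E | E in Dmin_feasible K eps P]))%E.

End QDefs.

(* A GPO [f] achieving [M] yields the effect [E] with [tr (E X) = (f X) 1 1]:
   complete positivity gives [0 <= E <= I], [tr (tau E) = 1/M] is constant on
   [Ecal], so [E] is orthogonal to [V(Ecal)], and [T(f rho, |1><1|) <= eps]
   forces [tr (rho (I - E)) <= eps]. Conversely, [tr (tau E)] is a constant [t]
   on [Ecal] for every feasible [E] of [D_min]; mixing [E] with [I] raises [t]
   to any [t'] in [[t, 1)], and measuring [{I - E, E}] then preparing [|0>] or
   [|1>] is a GPO achieving [M = 1/t']. So the supremum of the achievable [M]
   is the inverse of the minimum defining [D_min] (both are [+oo] when the
   minimum is [0]), and taking logarithms gives the equality. *)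

From HB Require Import structures.
From mathcomp Require Import all_boot all_order all_algebra.
From mathcomp Require Import sesquilinear spectral.
From mathcomp Require Import complex mxtens.
From mathcomp Require Import boolp classical_sets reals ereal exp.
From mathcomp Require Import ring lra.
Import Order.TTheory GRing.Theory Num.Theory.
Set Implicit Arguments. Unset Strict Implicit. Unset Printing Implicit Defensive.
Local Open Scope ring_scope.
Local Open Scope classical_set_scope.
Local Open Scope sesquilinear_scope.

Section SesquilinearForm.
Variable C : numClosedFieldType.

Definition sesq n (A : 'M[C]_n) (u v : 'cV[C]_n) : C := (u ^t* *m A *m v) 0 0.

Lemma sesqE n (A : 'M[C]_n) u v :
  sesq A u v = \sum_r \sum_s (u r 0)^* * A r s * v s 0.
Proof.
rewrite /sesq mxE exchange_big /=; apply: eq_bigr => r _.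
by rewrite mxE mulr_suml; apply: eq_bigr => s _; rewrite !mxE.
Qed.

Lemma sesq_delta n (A : 'M[C]_n) i j :
  sesq A (delta_mx i 0) (delta_mx j 0) = A i j.
Proof.
rewrite /sesq; have -> : (delta_mx i 0 : 'cV[C]_n) ^t* = delta_mx 0 i.
  by apply/matrixP => a b; rewrite !mxE conjC_nat eq_sym andbC.
by rewrite -rowE -colE !mxE.
Qed.

Lemma sesqDl n (A : 'M[C]_n) u v w : sesq A (u + v) w = sesq A u w + sesq A v w.
Proof. by rewrite /sesq linearD map_mxD !mulmxDl mxE. Qed.

Lemma sesqDr n (A : 'M[C]_n) u v w : sesq A w (u + v) = sesq A w u + sesq A w v.
Proof. by rewrite /sesq mulmxDr mxE. Qed.

Lemma sesqZl n (A : 'M[C]_n) c u v : sesq A (c *: u) v = c^* * sesq A u v.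
Proof. by rewrite /sesq linearZ map_mxZ /= -!scalemxAl mxE. Qed.

Lemma sesqZr n (A : 'M[C]_n) c u v : sesq A u (c *: v) = c * sesq A u v.
Proof. by rewrite /sesq -scalemxAr mxE. Qed.

Lemma sesqDm n (A B : 'M[C]_n) u : sesq (A + B) u u = sesq A u u + sesq B u u.
Proof. by rewrite /sesq mulmxDr mulmxDl mxE. Qed.

Lemma sesqBm n (A B : 'M[C]_n) u : sesq (A - B) u u = sesq A u u - sesq B u u.
Proof. by rewrite /sesq mulmxBr mulmxBl !mxE. Qed.

Lemma sesqZm n c (A : 'M[C]_n) u : sesq (c *: A) u u = c * sesq A u u.
Proof. by rewrite /sesq -scalemxAr -scalemxAl mxE. Qed.

Lemma sesq_mxtrace n (A : 'M[C]_n) v : sesq A v v = \tr (A *m (v *m v ^t*)).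
Proof. by rewrite /sesq mulmxA mxtrace_mulC mulmxA trace_mx11. Qed.

Lemma sesq1_ge0 n (v : 'cV[C]_n) : 0 <= sesq 1%:M v v.
Proof.
rewrite /sesq mulmx1 mxE; apply: sumr_ge0 => i _.
by rewrite !mxE mulrC mul_conjC_ge0.
Qed.

Lemma sesq_rank1_ge0 n (v u : 'cV[C]_n) : 0 <= sesq (v *m v ^t*) u u.
Proof.
rewrite /sesq !mulmxA -mulmxA mxE big_ord1.
have -> : (v ^t* *m u) 0 0 = ((u ^t* *m v) 0 0)^*.
  rewrite !mxE rmorph_sum; apply: eq_bigr => i _.
  by rewrite !mxE rmorphM /= conjCK mulrC.
exact: mul_conjC_ge0.
Qed.

(* Polarization: the forms at [e_i + e_j] and [e_i + 'i e_j] are real, which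
   forces [A i j = (A j i)^*]. *)
Lemma hermitian_of_sesq_ge0 n (A : 'M[C]_n) :
  (forall v, 0 <= sesq A v v) -> A = A ^t*.
Proof.
move=> A_ge0; apply/matrixP => i j; rewrite !mxE.
pose e k : 'cV[C]_n := delta_mx k 0.
have real_form v : (sesq A v v)^* = sesq A v v by apply/CrealP/ger0_real.
have h1 := real_form (e i + e j); have h2 := real_form (e i + 'i *: e j).
rewrite !(sesqDl, sesqDr, sesqZl, sesqZr, sesq_delta) in h1 h2.
have hi := real_form (e i); have hj := real_form (e j).
rewrite !sesq_delta in hi hj.
rewrite !rmorphD /= hi hj in h1.
rewrite !rmorphD !rmorphM /= hi hj conjCi rmorphN /= conjCi opprK in h2.
set x := A i j in h1 h2 *; set y := A j i in h1 h2 *.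
move/eqP: h1; rewrite -subr_eq0 => /eqP h1.
move/eqP: h2; rewrite -subr_eq0 => /eqP h2.
have /eqP : 'i * (y^* - x^* - x + y) = 0 by rewrite -h2; ring.
rewrite mulf_eq0 (negbTE (neq0Ci C)) /= => /eqP h3.
set L := (_ - _) in h1.
have : 2%:R * (x - y^*) = - L - (y^* - x^* - x + y) by rewrite /L; ring.
rewrite h1 h3 oppr0 addr0 => /eqP.
by rewrite mulf_eq0 pnatr_eq0 /= subr_eq0 => /eqP.
Qed.

Lemma sesq_conjmx_diag m n (X : 'M[C]_(m, n)) (A : 'M[C]_n) k :
  (X *m A *m X ^t*) k k = sesq A ((row k X) ^t*) ((row k X) ^t*).
Proof.
rewrite /sesq trmxCK !mxE; apply: eq_bigr => j _; rewrite !mxE; congr (_ * _).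
by apply: eq_bigr => l _; rewrite !mxE.
Qed.

(* Writing [B] as [U^t* diag(d) U], [tr (A B)] is the sum of the products of the
   nonnegative numbers [(U A U^t* ) k k] and [d k]. *)
Lemma mxtrace_mul_ge0 n (A B : 'M[C]_n) :
  (forall v, 0 <= sesq A v v) -> (forall v, 0 <= sesq B v v) ->
  0 <= \tr (A *m B).
Proof.
move=> A_ge0 B_ge0; have B_herm := hermitian_of_sesq_ge0 B_ge0.
have B_normal : B \is normalmx by apply/normalmxP; rewrite -B_herm.
have U_unitary := spectral_unitarymx B.
have B_spec := orthomx_spectralP B_normal.
rewrite invmx_unitary // in B_spec.
set U := spectralmx B in U_unitary B_spec; set d := spectral_diag B in B_spec.
have UBU : U *m B *m U ^t* = diag_mx d.
  rewrite B_spec !mulmxA (unitarymxP U_unitary) mul1mx -mulmxA.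
  by rewrite (unitarymxP U_unitary) mulmx1.
rewrite B_spec !mulmxA mxtrace_mulC !mulmxA mul_mx_diag /mxtrace.
apply: sumr_ge0 => k _; rewrite mxE; apply: mulr_ge0; first by rewrite sesq_conjmx_diag.
by move/matrixP: UBU => /(_ k k); rewrite sesq_conjmx_diag mxE eqxx mulr1n => <-.
Qed.

Lemma sum_mxtens_index k m (F : 'I_(k * m) -> C) :
  \sum_r F r = \sum_(i < k) \sum_(a < m) F (mxtens_index (i, a)).
Proof.
rewrite (reindex (@mxtens_index k m)) /=; last first.
  by exists (@mxtens_unindex k m) => x _; [apply: mxtens_indexK | apply: mxtens_unindexK].
by rewrite pair_big; apply: eq_bigr => -[i a].
Qed.

End SesquilinearForm.

Section Positivity.
Variable R : realType.
Local Notation C := R[i].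
Local Notation idx := mxtens_index.
Local Notation unidx := (@mxtens_unindex _ _).

Lemma psdP n (A : 'M[C]_n) : psd A <-> forall v, 0 <= sesq A v v.
Proof.
split=> [[_ A_ge0] v|A_ge0]; first exact: A_ge0.
by split; [apply: hermitian_of_sesq_ge0 | exact: A_ge0].
Qed.

Lemma psd_mxtrace_mul_ge0 n (A B : 'M[C]_n) : psd A -> psd B -> 0 <= \tr (A *m B).
Proof. by move=> /psdP A_ge0 /psdP B_ge0; apply: mxtrace_mul_ge0. Qed.

Lemma psd1 n : psd (1%:M : 'M[C]_n).
Proof. by apply/psdP => v; apply: sesq1_ge0. Qed.

Lemma psd0 n : psd (0 : 'M[C]_n).
Proof. by apply/psdP => v; rewrite /sesq mulmx0 mul0mx mxE. Qed.

Lemma psd_rank1 n (v : 'cV[C]_n) : psd (v *m v ^t*).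
Proof. by apply/psdP => u; apply: sesq_rank1_ge0. Qed.

Lemma psdD n (A B : 'M[C]_n) : psd A -> psd B -> psd (A + B).
Proof.
move=> /psdP A_ge0 /psdP B_ge0; apply/psdP => v.
by rewrite sesqDm addr_ge0.
Qed.

Lemma psdZ n (c : C) (A : 'M[C]_n) : 0 <= c -> psd A -> psd (c *: A).
Proof. by move=> c_ge0 /psdP A_ge0; apply/psdP => v; rewrite sesqZm mulr_ge0. Qed.

Lemma effect1 n : effect (1%:M : 'M[C]_n).
Proof. by split; rewrite ?subrr; [apply: psd1 | apply: psd0]. Qed.

Definition completely_positive n p (f : 'M[C]_n -> 'M[C]_p) :=
  forall k (X : 'M[C]_(k * n)), psd X -> psd (ampl f X).

Lemma ampl_entry k n p (f : 'M[C]_n -> 'M[C]_p) (X : 'M[C]_(k * n)) i a j b :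
  ampl f X (idx (i, a)) (idx (j, b)) = f (mxblock_of X i j) a b.
Proof.
rewrite /ampl summxE (bigD1 i) //= [X in _ + X]big1 => [|i' i'i]; last first.
  rewrite summxE big1 // => j' _; rewrite tensmxE mxE.
  by rewrite eq_sym (negbTE i'i) mul0r.
rewrite addr0 summxE (bigD1 j) //= [X in _ + X]big1 => [|j' j'j]; last first.
  by rewrite tensmxE mxE eqxx /= eq_sym (negbTE j'j) mul0r.
by rewrite tensmxE mxE !eqxx mul1r !addr0.
Qed.

Lemma sesq_ampl k n p (f : 'M[C]_n -> 'M[C]_p) (X : 'M[C]_(k * n)) v :
  sesq (ampl f X) v v = \sum_i \sum_j \sum_a \sum_b
    (v (idx (i, a)) 0)^* * f (mxblock_of X i j) a b * v (idx (j, b)) 0.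
Proof.
rewrite sesqE sum_mxtens_index; apply: eq_bigr => i _.
under eq_bigr => a _ do rewrite sum_mxtens_index.
rewrite exchange_big /=; apply: eq_bigr => j _; apply: eq_bigr => a _.
by apply: eq_bigr => b _; rewrite ampl_entry.
Qed.

(* The form of the combination at [u] is the form of [X] at [v = w (x) u]. *)
Lemma psd_block_comb k n (X : 'M[C]_(k * n)) (w : 'I_k -> C) :
  psd X -> psd (\sum_i \sum_j ((w i)^* * w j) *: mxblock_of X i j).
Proof.
move=> /psdP X_ge0; apply/psdP => u.
have := X_ge0 (\col_r (w (unidx r).1 * u (unidx r).2 0)).
rewrite sesqE sum_mxtens_index.
under eq_bigr => i _ do under eq_bigr => x _ do rewrite sum_mxtens_index.
rewrite sesqE => /le_trans; apply; rewrite le_eqVlt; apply/orP; left; apply/eqP.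
under [RHS]eq_bigr => x _ do under eq_bigr => y _ do
  rewrite summxE mulr_sumr mulr_suml.
under [RHS]eq_bigr => x _ do under eq_bigr => y _ do under eq_bigr => i _ do
  rewrite summxE mulr_sumr mulr_suml.
under [RHS]eq_bigr => x _ do rewrite exchange_big.
rewrite [RHS]exchange_big.
under [RHS]eq_bigr => i _ do under eq_bigr => x _ do rewrite exchange_big.
apply: eq_bigr => i _; apply: eq_bigr => x _; apply: eq_bigr => j _.
by apply: eq_bigr => y _; rewrite !mxE !mxtens_indexK /= rmorphM /=; ring.
Qed.

(* Embed [A] as the only block of an operator on [C^1 (x) C^n]. *)
Lemma cp_psd n p (f : 'M[C]_n -> 'M[C]_p) (A : 'M[C]_n) :
  completely_positive f -> psd A -> psd (f A).
Proof.
move=> f_cp /psdP A_ge0; apply/psdP => u.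
pose X : 'M[C]_(1 * n) := \matrix_(r, s) A (unidx r).2 (unidx s).2.
have X_psd : psd X.
  apply/psdP => v; rewrite sesqE sum_mxtens_index big_ord1.
  under eq_bigr do rewrite sum_mxtens_index big_ord1.
  have := A_ge0 (\col_a v (idx (ord0, a)) 0); rewrite sesqE.
  congr (_ <= _); apply: eq_bigr => a _; apply: eq_bigr => b _.
  by rewrite !mxE !mxtens_indexK.
have := (psdP _).1 (f_cp 1%N X X_psd) (\col_r u (unidx r).2 0).
rewrite sesq_ampl !big_ord1.
have -> : mxblock_of X ord0 ord0 = A.
  by apply/matrixP => a b; rewrite !mxE !mxtens_indexK.
rewrite sesqE; congr (_ <= _); apply: eq_bigr => a _; apply: eq_bigr => b _.
by rewrite !mxE !mxtens_indexK.
Qed.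

End Positivity.

Section MeasurePrepare.
Variable R : realType.
Local Notation C := R[i].
Local Notation idx := mxtens_index.

Definition meas_prep m n (G : 'I_m -> 'M[C]_n) (Y : 'M[C]_n) : 'M[C]_m :=
  diag_mx (\row_c \tr (G c *m Y)).

Lemma sum_mulrn_eq m (a : 'I_m) (F : 'I_m -> C) : \sum_b F b *+ (a == b) = F a.
Proof. by under eq_bigr do rewrite mulrb eq_sym; rewrite -big_mkcond big_pred1_eq. Qed.

(* The form of the amplification at [v] is [sum_a tr (G a Z_a)], where [Z_a] is
   the combination of the blocks of [X] with weights [v (i, a)]. *)
Lemma meas_prep_cp m n (G : 'I_m -> 'M[C]_n) :
  (forall c, psd (G c)) -> completely_positive (meas_prep G).
Proof.
move=> G_psd k X X_psd; apply/psdP => v; rewrite sesq_ampl.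
under eq_bigr => i _ do under eq_bigr => j _ do under eq_bigr => a _ do
  under eq_bigr => b _ do rewrite !mxE mulrnAr mulrnAl.
under eq_bigr => i _ do under eq_bigr => j _ do under eq_bigr => a _ do
  rewrite (sum_mulrn_eq a (fun b => _ * _ * v (idx (j, b)) 0)).
rewrite exchange_big /=; under eq_bigr => j _ do rewrite exchange_big.
rewrite exchange_big /=; apply: sumr_ge0 => a _.
pose w i := v (idx (i, a)) 0.
have := psd_mxtrace_mul_ge0 (G_psd a) (psd_block_comb w X_psd).
rewrite mulmx_sumr raddf_sum [X in _ -> _ <= X]exchange_big /=.
congr (_ <= _); apply: eq_bigr => i _; rewrite mulmx_sumr raddf_sum.
by apply: eq_bigr => j _; rewrite -scalemxAr /= mxtraceZ /w; ring.
Qed.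

Lemma meas_prep_cptp m n (G : 'I_m -> 'M[C]_n) :
  (forall c, psd (G c)) -> \sum_c G c = 1%:M -> cptp (meas_prep G).
Proof.
move=> G_psd G_sum; split; [|split].
- move=> s X Y; apply/matrixP => a b; rewrite !mxE.
  by rewrite mulmxDr -scalemxAr mxtraceD mxtraceZ mulrnDl mulrnAr.
- exact: meas_prep_cp.
- move=> X; rewrite mxtrace_diag.
  under eq_bigr do rewrite mxE.
  by rewrite -raddf_sum -mulmx_suml G_sum mul1mx.
Qed.

Definition binary_povm n (E : 'M[C]_n) (c : 'I_2) : 'M[C]_n :=
  if c == 1 then E else 1%:M - E.

Lemma binary_povm_cptp n (E : 'M[C]_n) :
  effect E -> cptp (meas_prep (binary_povm E)).
Proof.
move=> [E_psd IE_psd]; apply: meas_prep_cptp.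
  by move=> c; rewrite /binary_povm; case: ifP.
by rewrite big_ord_recl big_ord1 /binary_povm /= subrK.
Qed.

End MeasurePrepare.

Section TraceDistance.
Variable R : realType.
Local Notation C := R[i].

Lemma ler_Re (x y : C) : x <= y -> complex.Re x <= complex.Re y.
Proof. by rewrite lecE => /andP[]. Qed.

Lemma Re_le_norm (z : C) : complex.Re z <= complex.Re `|z|.
Proof. exact: le_trans (ler_norm _) (ler_Re (normc_ge_Re z)). Qed.

Lemma Re_realM (r : R) (z : C) : complex.Re ((r%:C)%C * z) = r * complex.Re z.
Proof. by case: z => a b /=; rewrite mul0r subr0. Qed.

Lemma unitarymx_entry_le1 n (U : 'M[C]_n) i j : U \is unitarymx -> `|U i j| <= 1.
Proof.
move/unitarymxP/matrixP/(_ i i); rewrite !mxE eqxx mulr1n => UU_ii.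
have : `|U i j| ^+ 2 <= 1.
  rewrite -UU_ii normCK (bigD1 j) //= !mxE lerDl; apply: sumr_ge0 => k _.
  by rewrite !mxE mul_conjC_ge0.
by rewrite expr_le1.
Qed.

Lemma trnorm_ge n (X U : 'M[C]_n) : U \is unitarymx ->
  complex.Re `|\tr (U *m X)| <= trnorm X.
Proof.
have tr_le V : V \is unitarymx -> `|\tr (V *m X)| <= \sum_i \sum_j `|X j i|.
  move=> V_unitary; apply: le_trans (ler_norm_sum _ _ _) _; apply: ler_sum => i _.
  rewrite mxE; apply: le_trans (ler_norm_sum _ _ _) _; apply: ler_sum => j _.
  by rewrite normrM ler_piMl // unitarymx_entry_le1.
move=> U_unitary; apply: ub_le_sup; last by exists U.
exists (complex.Re (\sum_i \sum_j `|X j i|)) => _ [V V_unitary <-].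
exact/ler_Re/tr_le.
Qed.

Lemma trnorm_le n (X : 'M[C]_n) b :
  (forall U, U \is unitarymx -> complex.Re `|\tr (U *m X)| <= b) -> trnorm X <= b.
Proof.
move=> le_b; apply: ge_sup => [|_ [V V_unitary <-]]; last exact: le_b.
exists (complex.Re `|\tr (1%:M *m X)|), 1%:M => //.
by apply/unitarymxP; rewrite trmx1 map_mx1 mulmx1.
Qed.

Lemma trnorm_diag_le n (d : 'rV[C]_n) :
  trnorm (diag_mx d) <= complex.Re (\sum_a `|d 0 a|).
Proof.
apply: trnorm_le => U U_unitary; apply: ler_Re.
rewrite mul_mx_diag /mxtrace; apply: le_trans (ler_norm_sum _ _ _) _.
apply: ler_sum => a _; rewrite mxE normrM.
by rewrite ler_piMl // unitarymx_entry_le1.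
Qed.

Lemma mxtrace2 (A : 'M[C]_2) : \tr A = A 0 0 + A 1 1.
Proof.
rewrite /mxtrace big_ord_recl big_ord1.
by have -> : lift ord0 ord0 = 1 :> 'I_2 by apply/val_inj.
Qed.

Lemma tdist_ket1_ge (Y : 'M[C]_2) :
  \tr Y = 1 -> complex.Re (1 - Y 1 1) <= tdist Y (ket1proj R).
Proof.
move=> Y_tr; pose U : 'M[C]_2 := diag_mx (\row_a (if a == 1 then -1 else 1)).
have U_unitary : U \is unitarymx.
  apply/unitarymxP/matrixP => a b; rewrite mul_diag_mx !mxE.
  case: a => [[|[|//]] ?]; case: b => [[|[|//]] ?];
    by rewrite /= ?rmorphN ?rmorph1 ?conjC0 ?mulr1n ?mulr0n ?mulN1r ?opprK ?mulr0
      ?mul1r ?oppr0.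
have U_tr : \tr (U *m (Y - ket1proj R)) = 2%:R * (1 - Y 1 1).
  have Y00 : Y 0 0 = 1 - Y 1 1 by rewrite -Y_tr mxtrace2 addrK.
  by rewrite mul_diag_mx mxtrace2 !mxE /= Y00; ring.
rewrite /tdist ler_pdivlMr //; apply: le_trans _ (trnorm_ge _ U_unitary).
rewrite U_tr; apply: le_trans _ (Re_le_norm _).
by rewrite mulr_natl raddfMn /= mulr_natr.
Qed.

Lemma tdist_meas_prep_ket1 n (E rho : 'M[C]_n) : effect E -> density rho ->
  tdist (meas_prep (binary_povm E) rho) (ket1proj R)
    <= complex.Re (\tr (rho *m (1%:M - E))).
Proof.
move=> [E_psd IE_psd] [rho_psd rho_tr].
set q := \tr (rho *m (1%:M - E)).
have q_ge0 : 0 <= q by rewrite /q mxtrace_mulC psd_mxtrace_mul_ge0.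
have Erho_tr : \tr (E *m rho) = 1 - q.
  by rewrite mxtrace_mulC /q mulmxBr mulmx1 linearB /= rho_tr opprB addrC subrK.
rewrite /tdist; have -> : meas_prep (binary_povm E) rho - ket1proj R =
    diag_mx (\row_a (if a == 1 then - q else q)).
  apply/matrixP => a b; rewrite !mxE /binary_povm.
  case: a => [[|[|//]] ?]; case: b => [[|[|//]] ?];
    rewrite /= ?mulr0n ?mulr1n ?subr0 ?sub0r ?Erho_tr //.
  - by rewrite /q mxtrace_mulC.
  - by rewrite addrAC subrr add0r.
rewrite ler_pdivrMr //; apply: le_trans (trnorm_diag_le _) _.
have -> : \sum_(a < 2) `|(\row_a (if a == 1 then - q else q)) 0 a| = \sum_(a < 2) `|q|.
  by apply: eq_bigr => a _; rewrite mxE fun_if normrN if_same.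
by rewrite sumr_const card_ord ger0_norm // raddfMn mulr_natr.
Qed.

Lemma meas_prep_piM n (E tau : 'M[C]_n) (M : R) : \tr tau = 1 ->
  \tr (tau *m E) = ((M^-1)%:C)%C -> meas_prep (binary_povm E) tau = piM M.
Proof.
move=> tau_tr; rewrite mxtrace_mulC => Etau_tr.
have IEtau_tr : \tr ((1%:M - E) *m tau) = ((1 - M^-1)%:C)%C.
  by rewrite mulmxBl mul1mx linearB /= tau_tr Etau_tr rmorphB.
apply/matrixP => a b; rewrite /piM !mxE /binary_povm.
case: a => [[|[|//]] ?]; case: b => [[|[|//]] ?];
  by rewrite /= ?IEtau_tr ?Etau_tr ?mulr1n ?mulr0n ?mulr1 ?mulr0 ?addr0 ?add0r.
Qed.

End TraceDistance.

Section ChannelEffect.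
Variables (R : realType) (n : nat) (f : 'M[R[i]]_n -> 'M[R[i]]_2).
Hypothesis f_cptp : cptp f.
Local Notation C := R[i].

HB.instance Definition _ := GRing.isLinear.Build C 'M[C]_n 'M[C]_2 *:%R f f_cptp.1.

Definition channel_effect : 'M[C]_n := \matrix_(a, b) f (delta_mx b a) 1 1.

Lemma mxtrace_channel_effect X : \tr (channel_effect *m X) = f X 1 1.
Proof.
rewrite [in RHS](matrix_sum_delta X) linear_sum summxE.
under [in RHS]eq_bigr => i _ do rewrite linear_sum summxE.
rewrite /mxtrace exchange_big /=; apply: eq_bigr => a _.
rewrite mxE; apply: eq_bigr => b _.
by rewrite linearZ !mxE mulrC.
Qed.

Lemma channel_effect_effect : effect channel_effect.
Proof.
have out_ge0 (v : 'cV[C]_n) c : 0 <= f (v *m v ^t*) c c.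
  rewrite -sesq_delta; apply/(psdP _).1/cp_psd; first exact: f_cptp.2.1.
  exact: psd_rank1.
split; apply/psdP => v.
  by rewrite sesq_mxtrace mxtrace_channel_effect out_ge0.
rewrite sesqBm !sesq_mxtrace mul1mx mxtrace_channel_effect -f_cptp.2.2.
by rewrite mxtrace2 addrK out_ge0.
Qed.

Lemma channel_effect_perpV (K : set 'M[C]_n) (Y : 'M[C]_2) :
  (forall tau, K tau -> f tau = Y) -> perpV channel_effect K.
Proof.
move=> f_const X [s [s_in ->]].
rewrite mxtrace_channel_effect linear_sum big_seq big1 ?mxE // => t /s_in [t1 t2].
by rewrite linearZ linearB /= !f_const // subrr scaler0.
Qed.

End ChannelEffect.

Section WorkExtraction.
Variables (R : realType) (n : nat) (eps : R) (P Ecal : set 'M[R[i]]_n).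
Hypotheses (eps_ge0 : 0 <= eps).
Hypotheses (P_density : P `<=` @density R n) (E_density : Ecal `<=` @density R n).
Local Notation C := R[i].
Local Notation feasible := (Dmin_feasible Ecal eps P).

Lemma Vspan_mxtrace X : Vspan Ecal X -> \tr X = 0.
Proof.
move=> [s [s_in ->]]; rewrite raddf_sum /= big_seq big1 // => t /s_in [t1 t2].
by rewrite linearZ /= linearB /= (E_density t1).2 (E_density t2).2 subrr mulr0.
Qed.

Lemma Dmin_feasible1 : feasible 1%:M.
Proof.
split; first exact: effect1.
split; first by move=> X /Vspan_mxtrace; rewrite mul1mx.
by move=> rho _; rewrite subrr mulmx0 mxtrace0.
Qed.

Lemma mxtrace_perpV_const E tau tau' : perpV E Ecal -> Ecal tau -> Ecal tau' ->
  \tr (tau *m E) = \tr (tau' *m E).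
Proof.
move=> E_perp tau_in tau'_in; apply/eqP; rewrite -subr_eq0.
have V_diff : Vspan Ecal (tau - tau').
  exists [:: (1, tau, tau')]; split; first by move=> t; rewrite inE => /eqP ->.
  by rewrite big_seq1 scale1r.
by rewrite !(mxtrace_mulC _ E) -linearB /= -mulmxBr E_perp.
Qed.

Lemma sup_tr_le E (r : R) :
  (forall tau, Ecal tau -> complex.Re (\tr (tau *m E)) <= r) -> (sup_tr Ecal E <= r%:E)%E.
Proof. by move=> le_r; apply: ge_ereal_sup => _ [tau tau_in <-]; rewrite lee_fin le_r. Qed.

Definition mix_id (l : R) (E : 'M[C]_n) : 'M[C]_n :=
  (l%:C)%C *: E + ((1 - l)%:C)%C *: 1%:M.

Lemma Dmin_feasible_mix_id E (l : R) : 0 <= l <= 1 -> feasible E -> feasible (mix_id l E).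
Proof.
move=> /andP[l_ge0 l_le1] [[E_psd IE_psd] [E_perp E_err]].
have IE_mix : 1%:M - mix_id l E = (l%:C)%C *: (1%:M - E).
  by apply/matrixP => i j; rewrite !mxE rmorphB /=; ring.
split; [split|split].
- by apply: psdD; apply: psdZ; rewrite ?lecR ?subr_ge0 //; apply: psd1.
- by rewrite IE_mix; apply: psdZ; rewrite ?lecR.
- move=> X X_in; rewrite /mix_id mulmxDl -!scalemxAl mul1mx mxtraceD !mxtraceZ.
  by rewrite E_perp // Vspan_mxtrace // !mulr0 addr0.
- move=> rho rho_in; rewrite IE_mix -scalemxAr mxtraceZ.
  rewrite Re_realM; apply: le_trans (ler_wpM2l l_ge0 (E_err _ rho_in)) _.
  by rewrite ler_piMl.
Qed.

Lemma mxtrace_mix_id l E tau : Ecal tau ->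
  \tr (tau *m mix_id l E) = (l%:C)%C * \tr (tau *m E) + ((1 - l)%:C)%C.
Proof.
move=> tau_in; rewrite /mix_id mulmxDr -!scalemxAr mulmx1 mxtraceD !mxtraceZ.
by rewrite (E_density tau_in).2 mulr1.
Qed.

Lemma gpo_feasible_of_effect E (M : R) : 1 < M -> effect E ->
  (forall rho, P rho -> complex.Re (\tr (rho *m (1%:M - E))) <= eps) ->
  (forall tau, Ecal tau -> \tr (tau *m E) = ((M^-1)%:C)%C) ->
  gpo_feasible eps P Ecal M.
Proof.
move=> M_gt1 E_effect E_err E_val; split => //.
exists (meas_prep (binary_povm E)); split; first exact: binary_povm_cptp.
split=> [rho rho_in|tau tau_in].
  exact: le_trans (tdist_meas_prep_ket1 E_effect (P_density rho_in)) (E_err _ rho_in).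
exact: meas_prep_piM (E_density tau_in).2 (E_val _ tau_in).
Qed.

Lemma Dmin_feasible_of_gpo (M : R) : gpo_feasible eps P Ecal M ->
  exists2 E, feasible E & forall tau, Ecal tau -> \tr (tau *m E) = ((M^-1)%:C)%C.
Proof.
move=> [_ [f [f_cptp [f_err f_val]]]].
have piM11 : piM M 1 1 = ((M^-1)%:C)%C by rewrite /piM !mxE /= mulr0 add0r mulr1.
exists (channel_effect f); last first.
  by move=> tau tau_in; rewrite mxtrace_mulC mxtrace_channel_effect // f_val // piM11.
split; first exact: channel_effect_effect.
split=> [|rho rho_in]; first exact: channel_effect_perpV f_val.
rewrite mulmxBr mulmx1 linearB /= mxtrace_mulC mxtrace_channel_effect //.
rewrite (P_density rho_in).2; apply: le_trans (f_err _ rho_in).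
by apply: tdist_ket1_ge; rewrite f_cptp.2.2 (P_density rho_in).2.
Qed.

Lemma Dmin_feasible_value E (r : R) : feasible E -> 0 < r -> (sup_tr Ecal E < r%:E)%E ->
  exists t : R, [/\ 0 <= t, t < r & forall tau, Ecal tau -> \tr (tau *m E) = (t%:C)%C].
Proof.
move=> [[E_psd _] [E_perp _]] r_gt0 lt_r.
have [[tau0 tau0_in]|no_tau] := pselect (exists tau0, Ecal tau0); last first.
  by exists 0; split=> // tau tau_in; case: no_tau; exists tau.
have val_ge0 : 0 <= \tr (tau0 *m E).
  exact: psd_mxtrace_mul_ge0 (E_density tau0_in).1 E_psd.
exists (complex.Re (\tr (tau0 *m E))); split.
- exact: ler_Re val_ge0.
- rewrite -lte_fin; apply: le_lt_trans lt_r.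
  by apply: ereal_sup_ubound; exists tau0.
- move=> tau tau_in; rewrite (mxtrace_perpV_const E_perp tau_in tau0_in).
  by rewrite RRe_real // ger0_real.
Qed.

(* Mixing with the identity raises the common value [t] of [tr (tau E)] to
   any [t'] in [[t, 1)]. *)
Lemma gpo_feasible_of_Dmin E (t t' : R) : feasible E ->
  (forall tau, Ecal tau -> \tr (tau *m E) = (t%:C)%C) -> t <= t' -> 0 < t' -> t' < 1 ->
  gpo_feasible eps P Ecal t'^-1.
Proof.
move=> E_feas E_val t_le t'_gt0 t'_lt1.
have t_lt1 : 0 < 1 - t by rewrite subr_gt0 (le_lt_trans t_le).
pose l := (1 - t') / (1 - t).
have l01 : 0 <= l <= 1.
  by rewrite /l divr_ge0 ?(ltW t_lt1) ?subr_ge0 ?(ltW t'_lt1) //= ler_pdivrMr // mul1r lerD2l lerN2.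
have [mix_effect [_ mix_err]] := Dmin_feasible_mix_id l01 E_feas.
apply: gpo_feasible_of_effect mix_effect mix_err _; first by rewrite invf_gt1.
move=> tau tau_in; rewrite mxtrace_mix_id // E_val // invrK -rmorphM -rmorphD.
by congr ((_)%:C)%C; rewrite /l; field; rewrite lt0r_neq0.
Qed.

Lemma gpo_feasible_gt E (x : R) : feasible E -> 1 <= x -> (sup_tr Ecal E < (x^-1)%:E)%E ->
  exists2 M, gpo_feasible eps P Ecal M & x < M.
Proof.
move=> E_feas x_ge1 lt_xV.
have xV_gt0 : 0 < x^-1 by rewrite invr_gt0 (lt_le_trans ltr01).
have xV_le1 : x^-1 <= 1 by rewrite invf_le1 // (lt_le_trans ltr01).
have [t [t_ge0 t_lt E_val]] := Dmin_feasible_value E_feas xV_gt0 lt_xV.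
pose t' := (t + x^-1) / 2.
have t'_gt0 : 0 < t' by rewrite /t'; lra.
exists t'^-1; first by apply: gpo_feasible_of_Dmin E_feas E_val _ _ _; rewrite /t'; lra.
by rewrite -[x]invrK ltf_pV2 ?posrE // /t'; lra.
Qed.

End WorkExtraction.

Section ExtendedReals.
Variable R : realType.
Local Open Scope ereal_scope.

Lemma ereal_sup_setU1_ge (G : set R) (y : \bar R) :
  (forall x : R, (1 <= x)%R -> x%:E < y -> exists2 M, G M & (x < M)%R) ->
  y <= ereal_sup (1%:E |` [set M%:E | M in G]).
Proof.
move=> G_gt; rewrite leNgt; apply/negP; set S := _ |` _ => sup_lt.
have S_ub z : S z -> z <= ereal_sup S by apply: ereal_sup_ubound.
have := S_ub _ (or_introl erefl); move: sup_lt.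
case: (ereal_sup S) S_ub => [r| |] // S_ub r_lt; last by rewrite ltNge leey in r_lt.
rewrite lee_fin => r_ge1.
have [M GM rM] := G_gt r r_ge1 r_lt.
have : M%:E <= r%:E by apply: S_ub; right; exists M.
by rewrite lee_fin leNgt rM.
Qed.

Lemma lne_ereal_sup_setU1 (i : \bar R) (G : set R) : i <= 1%:E ->
  (forall M, G M -> i <= (M^-1)%:E) ->
  (forall x : R, (1 <= x)%R -> i < (x^-1)%:E -> exists2 M, G M & (x < M)%R) ->
  lne (ereal_sup (1%:E |` [set M%:E | M in G])) = - lne i.
Proof.
move=> i_le1 G_le G_gt.
have [i_le0|i_gt0] := leP i 0%:E.
  rewrite (le0_lneNy i_le0); have -> // : ereal_sup (1%:E |` [set M%:E | M in G]) = +oo.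
  apply/eqP; rewrite eq_le leey; apply: ereal_sup_setU1_ge => x x_ge1 _.
  by apply: G_gt => //; apply: le_lt_trans i_le0 _; rewrite lte_fin invr_gt0; lra.
case: i i_le1 i_gt0 G_le G_gt => [m| |] //; rewrite lee_fin lte_fin.
move=> m_le1 m_gt0 G_le G_gt; rewrite -lneV //; congr lne.
apply/eqP; rewrite eq_le; apply/andP; split; last first.
  apply: ereal_sup_setU1_ge => x x_ge1; rewrite lte_fin => x_lt.
  by apply: G_gt; rewrite // lte_fin -[m]invrK ltf_pV2 ?posrE ?invr_gt0 //; lra.
apply: ge_ereal_sup => _ [->|[M GM <-]]; rewrite lee_fin; first by rewrite invf_ge1.
have := G_le M GM; rewrite lee_fin => m_le.
have M_gt0 : (0 < M)%R by rewrite -invr_gt0 (lt_le_trans m_gt0).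
by rewrite -[M]invrK lef_pV2 ?posrE ?invr_gt0.
Qed.

End ExtendedReals.

Theorem theorem4 (R : realType) (n : nat) (eps : R) (P E : set 'M[R[i]]_n) :
  0 <= eps -> eps < 1 ->
  P `<=` @density R n -> E `<=` @density R n ->
  betaW_GPO eps P E = Dmin E eps P E.
Proof.
move=> eps_ge0 _ P_density E_density; apply: lne_ereal_sup_setU1.
- apply: le_trans (ereal_inf_lbound _) (sup_tr_le _).
    by exists 1%:M; first exact: Dmin_feasible1.
  by move=> tau /E_density[_ tau_tr]; rewrite mulmx1 tau_tr.
- move=> M /(Dmin_feasible_of_gpo P_density)[X X_feas X_val].
  apply: le_trans (ereal_inf_lbound _) (sup_tr_le _); first by exists X.
  by move=> tau /X_val ->.
- move=> x x_ge1 /ereal_inf_lt[_ [X X_feas <-]].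
  exact: gpo_feasible_gt.
Qed.
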